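(* Let $\mathcal{H}$ be a real Hilbert space, and let $C$ and $Q$ be nonempty, closed and convex subsets of $\mathcal{H}$. Let $f:\mathcal{H}\to\mathcal{H}$ be $\alpha_1$-inverse strongly monotone and $g:\mathcal{H}\to\mathcal{H}$ be $\alpha_2$-inverse strongly monotone, for some $\alpha_1,\alpha_2>0$. Set $\alpha:=\min\{\alpha_1,\alpha_2\}$ and let $\lambda\in(0,2\alpha)$. Assume that $\Gamma:=SOL(C,f)\cap SOL(Q,g)\neq\emptyset$. Given an arbitrary $x^0\in\mathcal{H}$, define the sequences $$y^k=P_Q\big(x^k-\lambda g(x^k)\big),\qquad x^{k+1}=P_C\big(y^k-\lambda f(y^k)\big),\qquad k=0,1,2,\ldots.$$ Then $\{x^k\}_{k=0}^\infty$ converges weakly to a point $x^\ast\in\Gamma$, and moreover $x^\ast=\lim_{k\to\infty}P_\Gamma(x^k)$ (strong limit).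
   Context: An operator $h:\mathcal{H}\to\mathcal{H}$ is $\beta$-inverse strongly monotone ($\beta>0$) if $\langle h(x)-h(y),x-y\rangle\geq\beta\|h(x)-h(y)\|^2$ for all $x,y\in\mathcal{H}$. For a nonempty closed convex set $D\subset\mathcal{H}$, $P_D$ denotes the metric (nearest point) projection onto $D$. For such $D$ and an operator $h$, $SOL(D,h)$ denotes the solution set of the variational inequality: the set of $x^\ast\in D$ with $\langle h(x^\ast),x-x^\ast\rangle\geq 0$ for all $x\in D$. The set $\Gamma$ is closed and convex (so $P_\Gamma$ is well defined when $\Gamma\ne\emptyset$). *)

(* A real Hilbert space is modelled as a complete
   normed module over a realType R whose norm is induced by an inner product. *)
From HB Require Import structures.
From mathcomp Require Import all_boot all_order all_algebra.
From mathcomp Require Import all_classical all_reals all_analysis.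
Set Implicit Arguments. Unset Strict Implicit. Unset Printing Implicit Defensive.
Import Order.TTheory GRing.Theory Num.Theory.
Import numFieldNormedType.Exports.
Local Open Scope classical_set_scope.
Local Open Scope ring_scope.

Definition is_inner_product (R : realType) (H : normedModType R)
  (inner : H -> H -> R) : Prop :=
  [/\ (forall x y, inner x y = inner y x),
      (forall (a : R) x y z, inner (a *: x + y) z = a * inner x z + inner y z)
    & (forall x, inner x x = `|x| ^+ 2)].

Definition convex_set (R : realType) (H : normedModType R) (D : set H) : Prop :=
  forall a b (t : R), D a -> D b -> 0 <= t -> t <= 1 ->
    D (t *: a + (1 - t) *: b).

Definition nonempty_closed_convex (R : realType) (H : normedModType R)
  (D : set H) : Prop := D !=set0 /\ closed D /\ convex_set D.

Definition inverse_strongly_monotone (R : realType) (H : normedModType R)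
  (inner : H -> H -> R) (beta : R) (h : H -> H) : Prop :=
  forall x y, inner (h x - h y) (x - y) >= beta * `|h x - h y| ^+ 2.

Definition is_metric_projection (R : realType) (H : normedModType R)
  (D : set H) (P : H -> H) : Prop :=
  forall x, D (P x) /\ forall z, D z -> `|x - P x| <= `|x - z|.

Definition SOL (R : realType) (H : normedModType R) (inner : H -> H -> R)
  (D : set H) (h : H -> H) : set H :=
  [set xs | D xs /\ forall z, D z -> 0 <= inner (h xs) (z - xs)].

Definition weakly_converges (R : realType) (H : normedModType R)
  (inner : H -> H -> R) (u : nat -> H) (l : H) : Prop :=
  forall z, (fun k => inner (u k) z) @ \oo --> inner l z.

(* Fix p in Gamma.  It is a fixed point of both projected-gradient steps, so firm
   nonexpansiveness of the projections and inverse strong monotonicity of f and g give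
     |x_{k+1} - p|^2 + |residuals_k|^2
       + lam (2 alpha - lam) (|g x_k - g p|^2 + |f y_k - f p|^2) <= |x_k - p|^2.
   Hence (x_k) is Fejer monotone with respect to Gamma, all residuals tend to 0, and
   (P_Gamma x_k) is a Cauchy sequence with some limit xs.  Weak cluster points are taken
   along ultrafilters refining the cofinite filter: a bounded sequence has a weak limit
   along any ultrafilter (compactness of real intervals and the Riesz representation
   theorem), such a limit lies in Gamma because the residuals vanish, and it equals xs by
   the obtuse-angle characterization of P_Gamma.  A real sequence converging to the same
   limit along every such ultrafilter converges along the cofinite filter itself. *)

From Pilot Require Import Defs.
From HB Require Import structures.
From mathcomp Require Import all_boot all_order all_algebra.
From mathcomp Require Import all_classical all_reals all_analysis.
From mathcomp Require Import ring lra.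
Import Order.TTheory GRing.Theory Num.Theory.
Import numFieldNormedType.Exports.
Local Open Scope classical_set_scope.
Local Open Scope ring_scope.
Set Implicit Arguments. Unset Strict Implicit. Unset Printing Implicit Defensive.

Lemma quad_ge0_lin_coef_eq0 (R : realFieldType) (c n : R) :
  (forall t, 0 <= 2 * t * c + t ^+ 2 * n) -> c = 0.
Proof.
move=> quad; set N := `|n| + 1.
have N0 : 0 < N by rewrite ltr_wpDl.
have := quad (- c / N); rewrite -(pmulr_rge0 _ (exprn_gt0 2 N0)).
have -> : N ^+ 2 * (2 * (- c / N) * c + (- c / N) ^+ 2 * n) = c ^+ 2 * (n - 2 * N).
  by field; rewrite gt_eqF.
have : n - 2 * N < 0 by rewrite /N; have := ler_norm n; have := normr_ge0 n; lra.
move=> neg ge0; have : c ^+ 2 <= 0 by nra.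
by move=> le0; apply/eqP; rewrite -sqrf_eq0 eq_le le0 sqr_ge0.
Qed.

Lemma ge0_seq_almost_min (R : realType) (a : R ^nat) :
  (forall k, 0 <= a k) -> forall e, 0 < e -> exists N, forall m, a N < a m + e.
Proof.
move=> a0 e e0; have ainf : has_inf (range a).
  by split; [exists (a 0%N), 0%N | exists 0 => _ [k _ <-]].
have [_ [N _ <-] aN] := inf_adherent e0 ainf.
exists N => m; have : inf (range a) <= a m by apply: (ge_inf ainf.2); exists m.
lra.
Qed.

Lemma cvg0_of_sqr_le_decrease (R : realType) (V : normedModType R)
    (s : nat -> V) (a : R ^nat) (c : R) :
  0 < c -> (forall k, a k.+1 <= a k) -> (forall k, 0 <= a k) ->
  (forall k, c * `|s k| ^+ 2 <= a k - a k.+1) -> s @ \oo --> 0.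
Proof.
move=> c0 anoninc a0 sa; apply/cvgr0Pnorm_lt => e e0.
have [N aN] := ge0_seq_almost_min a0 (mulr_gt0 c0 (exprn_gt0 2 e0)).
exists N => // k /= Nk.
have := aN k.+1; have := (nonincreasing_seqP a).1 anoninc _ _ Nk.
have := sa k => ? ? ?; have : c * `|s k| ^+ 2 < c * e ^+ 2 by lra.
by rewrite ltr_pM2l // ltr_pXn2r ?nnegrE // ltW.
Qed.

Lemma cvg0_dominated (T : Type) (F : set_system T) {FF : Filter F}
    (R : realType) (V : normedModType R) (r : T -> R) (s : T -> V) (K : R) :
  (forall t, `|r t| <= K * `|s t|) -> s @ F --> 0 -> r @ F --> 0.
Proof.
move=> rs /cvgr0Pnorm_lt s0; apply/cvgr0Pnorm_lt => e e0.
have K1 : 0 < `|K| + 1 by rewrite ltr_wpDl.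
have eK : e / (`|K| + 1) * (`|K| + 1) = e by rewrite mulfVK // gt_eqF.
near=> t; have st : `|s t| < e / (`|K| + 1) by near: t; apply/s0/divr_gt0.
apply: le_lt_trans (rs t) _.
have := ler_norm K; have := normr_ge0 K; have := normr_ge0 (s t); nra.
Unshelve. all: by end_near.
Qed.

Lemma ultra_bounded_cvg (T : Type) (U : set_system T) (R : realType)
    (r : T -> R) (B : R) :
  UltraFilter U -> (forall t, `|r t| <= B) -> cvg (r @ U).
Proof.
move=> UU rB.
have : U (r @^-1` `[- B, B]%classic).
  by apply: filterE => t /=; rewrite in_itv /= -ler_norml.
move=> /(@segment_compact R (- B) B (r @ U)) [l [_ cl]].
apply/cvg_ex; exists l => N Nl.
have [//|UnN] := in_ultra_setVsetC (r @^-1` N) UU.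
by have [z [nz Nz]] := cl (~` N) N UnN Nl.
Qed.

Lemma cvg_of_ultra (T : Type) (F : set_system T) {FF : ProperFilter F}
    (R : realType) (r : T -> R) (l : R) :
  (forall U, UltraFilter U -> F `<=` U -> r @ U --> l) -> r @ F --> l.
Proof.
move=> ultra_cvg; apply/cvgrPdist_lt => e e0; apply: contrapT => nearF.
pose S := [set t | e <= `|l - r t|].
have FS A : F A -> A `&` S !=set0.
  move=> FA; apply: contrapT => AS0; apply: nearF; apply: filterS FA => t At.
  by rewrite ltNge; apply/negP => etl; apply: AS0; exists t.
pose G := filter_from F (fun A => A `&` S).
have GF : ProperFilter G.
  apply: filter_from_proper; last exact: FS.
  apply: filter_from_filter; first by exists setT; apply: filterT.
  by move=> A B FA FB; exists (A `&` B); [exact: filterI | rewrite setIACA setIid].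
have [U [UU GU]] := ultraFilterLemma GF.
have FU : F `<=` U by move=> A FA; apply: GU; exists A => // t [].
have US : U S by apply: GU; exists setT; [exact: filterT | move=> t []].
have [t [lt_e le_e]] :=
  filter_ex (filterI ((cvgrPdist_lt _ _).1 (ultra_cvg U UU FU) e e0) US).
by move: le_e; rewrite /S /= leNgt lt_e.
Qed.

Section InnerProduct.
Variables (R : realType) (H : completeNormedModType R) (ip : H -> H -> R).
Hypothesis ipH : is_inner_product ip.

Lemma ipC x y : ip x y = ip y x.
Proof. by case: ipH. Qed.

Lemma ipxx x : ip x x = `|x| ^+ 2.
Proof. by case: ipH. Qed.

Lemma ip_ge0 x : 0 <= ip x x.
Proof. by rewrite ipxx sqr_ge0. Qed.

Lemma ipDZl a x y z : ip (a *: x + y) z = a * ip x z + ip y z.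
Proof. by case: ipH => _ + _; apply. Qed.

Lemma ip0l z : ip 0 z = 0.
Proof. by have := ipDZl 1 0 0 z; rewrite scaler0 addr0 mul1r; lra. Qed.

Lemma ipDl x y z : ip (x + y) z = ip x z + ip y z.
Proof. by rewrite -[x in LHS]scale1r ipDZl mul1r. Qed.

Lemma ipZl a x z : ip (a *: x) z = a * ip x z.
Proof. by rewrite -[a *: x]addr0 ipDZl ip0l addr0. Qed.

Lemma ipNl x z : ip (- x) z = - ip x z.
Proof. by rewrite -scaleN1r ipZl mulN1r. Qed.

Lemma ipBl x y z : ip (x - y) z = ip x z - ip y z.
Proof. by rewrite ipDl ipNl. Qed.

Lemma ip0r z : ip z 0 = 0.
Proof. by rewrite ipC ip0l. Qed.

Lemma ipDr x y z : ip z (x + y) = ip z x + ip z y.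
Proof. by rewrite ipC ipDl !(ipC z). Qed.

Lemma ipZr a x z : ip z (a *: x) = a * ip z x.
Proof. by rewrite ipC ipZl ipC. Qed.

Lemma ipNr x z : ip z (- x) = - ip z x.
Proof. by rewrite ipC ipNl ipC. Qed.

Lemma ipBr x y z : ip z (x - y) = ip z x - ip z y.
Proof. by rewrite ipDr ipNr. Qed.

Ltac ip_expand :=
  rewrite ?(ipBl, ipBr, ipDl, ipDr, ipZl, ipZr, ipNl, ipNr, ip0l, ip0r).

Lemma ip_subxx_le0_eq a b : ip (a - b) (a - b) <= 0 -> a = b.
Proof.
rewrite ipxx => le0; apply/eqP; rewrite -subr_eq0 -normr_eq0 -sqrf_eq0.
by rewrite eq_le le0 sqr_ge0.
Qed.

Lemma normr_ip_le x y : `|ip x y| <= `|x| * `|y|.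
Proof.
have [->|y0] := eqVneq y 0; first by rewrite ip0r normr0 normr0 mulr0.
have ny : 0 < `|y| ^+ 2 by rewrite exprn_gt0 // normr_gt0.
(* expand [0 <= |x - t y|^2] at the minimizing [t = <x,y> / |y|^2] *)
have := ip_ge0 (x - (ip x y / `|y| ^+ 2) *: y).
ip_expand; rewrite (ipC y x) !ipxx; set c := ip x y; set n := `|y| ^+ 2.
move=> /(mulr_ge0 (ltW ny)).
rewrite [X in 0 <= X](_ : _ = n * `|x| ^+ 2 - c ^+ 2); last first.
  by rewrite -/n; field; rewrite gt_eqF.
rewrite subr_ge0 -exprMn mulrC => le_c.
by rewrite -(@ler_pXn2r _ 2) //= ?nnegrE ?mulr_ge0 // real_normK ?num_real.
Qed.

Lemma ip_le x y : ip x y <= `|x| * `|y|.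
Proof. exact: le_trans (ler_norm _) (normr_ip_le x y). Qed.

Section MetricProjection.
Variables (D : set H) (P : H -> H).
Hypotheses (convD : Defs.convex_set D) (projP : is_metric_projection D P).

Lemma proj_mem x : D (P x).
Proof. by case: (projP x). Qed.

Lemma proj_obtuse x z : D z -> ip (x - P x) (z - P x) <= 0.
Proof.
move=> Dz; set p := P x; set c := ip (x - p) (z - p); set d := ip (z - p) (z - p).
(* minimality of [p] against the points [p + t (z - p)] of the segment *)
have small_t t : 0 < t -> t <= 1 -> 2 * c <= t * d.
  move=> t0 t1; have := (projP x).2 _ (convD Dz (proj_mem x) (ltW t0) t1).
  rewrite -ler_sqr ?nnegrE // -!ipxx -/p => le_p.
  have : 0 <= t * (t * d - 2 * c).
    move: le_p; rewrite /c /d; ip_expand; rewrite ?(ipC p z) ?(ipC p x) ?(ipC z x).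
    lra.
  by rewrite pmulr_rge0 //; lra.
rewrite leNgt; apply/negP => c0; have d0 : 0 <= d by apply: ip_ge0.
have K0 : 0 < d + c + 1 by lra.
have := small_t (c / (d + c + 1)) (divr_gt0 c0 K0).
rewrite ler_pdivrMr // mul1r; have ht : c / (d + c + 1) * (d + c + 1) = c.
  by rewrite mulfVK // gt_eqF.
nra.
Qed.

Lemma proj_firmly_nonexpansive u v :
  `|P u - P v| ^+ 2 + `|(u - P u) - (v - P v)| ^+ 2 <= `|u - v| ^+ 2.
Proof.
have := proj_obtuse u (proj_mem v); have := proj_obtuse v (proj_mem u).
rewrite -!ipxx; set a := P u; set b := P v; ip_expand.
rewrite ?(ipC v u) ?(ipC a u) ?(ipC b u) ?(ipC a v) ?(ipC b v) ?(ipC b a); lra.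
Qed.

Lemma proj_step_fixed (h : H -> H) (lam : R) p : 0 <= lam -> SOL ip D h p ->
  P (p - lam *: h p) = p.
Proof.
move=> lam0 [Dp hp]; set q := P _.
have obt := proj_obtuse (p - lam *: h p) Dp.
have vi : lam * 0 <= lam * ip (h p) (q - p) by apply/ler_wpM2l/hp/proj_mem.
apply: ip_subxx_le0_eq; move: obt vi; rewrite -/q; ip_expand.
rewrite ?(ipC q p) ?(ipC (h p) p) ?(ipC (h p) q); lra.
Qed.

Lemma proj_step_ineq (h : H -> H) (beta lam : R) (p x y : H) :
  inverse_strongly_monotone ip beta h -> 0 <= lam ->
  P (p - lam *: h p) = p -> y = P (x - lam *: h x) ->
  `|y - p| ^+ 2 + `|(x - y) - lam *: (h x - h p)| ^+ 2
  + lam * (2 * beta - lam) * `|h x - h p| ^+ 2 <= `|x - p| ^+ 2.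
Proof.
move=> ism lam0 fixp {y}->.
have := proj_firmly_nonexpansive (x - lam *: h x) (p - lam *: h p).
rewrite fixp; set y := P _.
have -> : (x - lam *: h x - y) - (p - lam *: h p - p) = (x - y) - lam *: (h x - h p).
  by rewrite [p - _]addrC addrK opprK scalerBr opprB addrA (addrAC x) [RHS]addrAC.
have -> : `|x - lam *: h x - (p - lam *: h p)| ^+ 2
  = `|x - p| ^+ 2 - 2 * lam * ip (h x - h p) (x - p) + lam ^+ 2 * `|h x - h p| ^+ 2.
  rewrite -!ipxx; ip_expand.
  rewrite ?(ipC p x) ?(ipC (h x) x) ?(ipC (h p) x) ?(ipC (h x) p) ?(ipC (h p) p).
  rewrite ?(ipC (h p) (h x)) ?(ipC x (h x)) ?(ipC x (h p)) ?(ipC p (h x)) ?(ipC p (h p)).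
  lra.
have : lam * (beta * `|h x - h p| ^+ 2) <= lam * ip (h x - h p) (x - p).
  exact: ler_wpM2l.
lra.
Qed.

End MetricProjection.

Section InverseStronglyMonotone.
Variables (D : set H) (h : H -> H) (beta : R).
Hypotheses (beta_gt0 : 0 < beta) (ism : inverse_strongly_monotone ip beta h).

Lemma ism_ip_le0_eq a b : ip (h a - h b) (a - b) <= 0 -> h a = h b.
Proof.
move=> le0; apply: ip_subxx_le0_eq.
have := ism a b; rewrite -ipxx; have := ip_ge0 (h a - h b).
by rewrite -(pmulr_rle0 _ beta_gt0); lra.
Qed.

Lemma ism_SOL_eq a b : SOL ip D h a -> SOL ip D h b -> h a = h b.
Proof.
move=> [Da va] [Db vb]; apply: ism_ip_le0_eq.
have := va _ Db; have := vb _ Da; ip_expand.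
rewrite ?(ipC b a) ?(ipC (h a) a) ?(ipC (h b) a) ?(ipC (h a) b) ?(ipC (h b) b); lra.
Qed.

Lemma SOL_convex : Defs.convex_set D -> Defs.convex_set (SOL ip D h).
Proof.
move=> convD a b t Sa Sb t0 t1; set z := t *: a + (1 - t) *: b.
have hab := ism_SOL_eq Sa Sb.
have hz : h z = h a.
  apply: ip_subxx_le0_eq; rewrite ipxx.
  have := ism z a; have := ism z b; rewrite -hab => zb za.
  have : t * ip (h z - h a) (z - a) + (1 - t) * ip (h z - h a) (z - b) = 0.
    rewrite -[RHS](ip0r (h z - h a)) -(subrr z) {2 4}/z; ip_expand.
    rewrite ?(ipC b a) ?(ipC (h a) a) ?(ipC (h z) a) ?(ipC (h a) b) ?(ipC (h z) b).
    ring.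
  set n := beta * _ in za zb => sum0.
  have : t * n + (1 - t) * n <= 0.
    by rewrite -sum0 lerD // ler_wpM2l // subr_ge0.
  have -> : t * n + (1 - t) * n = n by ring.
  by rewrite /n pmulr_rle0.
case: Sa Sb => [Da va] [Db vb]; split; first exact: convD.
move=> w Dw; rewrite hz.
have t1' : 0 <= 1 - t by rewrite subr_ge0.
have := mulr_ge0 t0 (va _ Dw); have := mulr_ge0 t1' (vb _ Dw).
rewrite -hab /z; ip_expand; lra.
Qed.

End InverseStronglyMonotone.

Section Riesz.
Variables (L : H -> R) (B : R).
Hypotheses (L_linear : forall a u v, L (a *: u + v) = a * L u + L v)
  (L_bounded : forall v, `|L v| <= B * `|v|).

Let L0 : L 0 = 0.
Proof. by have := L_linear 1 0 0; rewrite scaler0 addr0 mul1r; lra. Qed.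

Let LZ a u : L (a *: u) = a * L u.
Proof. by rewrite -[a *: u]addr0 L_linear L0 addr0. Qed.

Let LD u v : L (u + v) = L u + L v.
Proof. by have := L_linear 1 u v; rewrite scale1r mul1r. Qed.

Let LB u v : L (u - v) = L u - L v.
Proof. by rewrite LD -scaleN1r LZ mulN1r. Qed.

(* if [L = ip w] then [energy y = |y - w|^2 - |w|^2], so [w] is recovered as a minimizer *)
Let energy y := ip y y - 2 * L y.

Let energy_lb y : - B ^+ 2 <= energy y.
Proof.
rewrite /energy ipxx; have := L_bounded y; have := sqr_ge0 (`|y| - B).
have := ler_norm (L y); nra.
Qed.

Let energy_parallelogram m a b : (forall y, m <= energy y) ->
  ip (a - b) (a - b) <= 2 * (energy a - m) + 2 * (energy b - m).
Proof.
move=> m_le; have := m_le (2^-1 *: (a + b)); rewrite /energy LZ LD.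
ip_expand; rewrite ?(ipC b a); have : (2:R)^-1 * 2 = 1 by rewrite mulVf.
nra.
Qed.

Let energy_le_near w y :
  energy w <= energy y + `|w - y| * (`|y| + `|w| + 2 * `|B|).
Proof.
have sym : ip (w - y) (w + y) = ip w w - ip y y.
  by ip_expand; rewrite (ipC y w); lra.
have := ip_le (w - y) (w + y); rewrite sym.
have : `|w - y| * `|w + y| <= `|w - y| * (`|y| + `|w|).
  by apply: ler_wpM2l => //; rewrite addrC ler_normD.
have := L_bounded (w - y); rewrite LB.
have : B * `|w - y| <= `|B| * `|w - y| by apply: ler_wpM2r => //; apply: ler_norm.
have := ler_norm (L y - L w); rewrite -opprB normrN /energy; lra.
Qed.

Let m := inf (range energy).

Let einf : has_inf (range energy).
Proof.
by split; [exists (energy 0), 0 | exists (- B ^+ 2) => _ [y _ <-]; apply: energy_lb].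
Qed.

Let m_le y : m <= energy y.
Proof. by apply: (ge_inf einf.2); exists y. Qed.

(* near-minimizers form a Cauchy filter by the parallelogram law *)
Let near_min_cvg :
  exists w, forall d r, 0 < d -> 0 < r -> exists y, `|w - y| < r /\ energy y < m + d.
Proof.
pose S d := [set y | energy y < m + d].
have S_ne d : 0 < d -> S d !=set0.
  by move=> d0; have [_ [y _ <-] ey] := inf_adherent d0 einf; exists y.
pose F := filter_from [set d : R | 0 < d] S.
have FF : ProperFilter F.
  apply: filter_from_proper; last by move=> d; apply: S_ne.
  apply: filter_from_filter; first by exists 1; rewrite /= ltr01.
  move=> d d' d0 d'0; exists (Num.min d d'); first by rewrite /= lt_min d0 d'0.
  by move=> y /= ey; split; apply: (lt_le_trans ey); rewrite lerD2l ge_min lexx ?orbT.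
have /cvg_ex[w Fw] : cvg F.
  apply/cauchy_cvgP; apply: cauchy_exP => eps eps0.
  have d0 : 0 < eps ^+ 2 / 8 by rewrite divr_gt0 ?exprn_gt0.
  have [c Sc] := S_ne _ d0; exists c; exists (eps ^+ 2 / 8) => // y Sy.
  rewrite -ball_normE /=; have := energy_parallelogram c y m_le.
  rewrite ipxx; move: Sc Sy; rewrite /S /= => Sc Sy par.
  by rewrite ltNge; apply/negP => le_eps; nra.
exists w => d r d0 r0.
have FSd : F (S d) by exists d.
have [y [wy Sy]] := filter_ex (filterI (Fw _ (nbhsx_ballx w r r0)) FSd).
by exists y; move: wy; rewrite -ball_normE.
Qed.

Let energy_has_min : exists w, forall y, energy w <= energy y.
Proof.
have [w near_w] := near_min_cvg; exists w => z; apply: le_trans (m_le z).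
apply/ler_addgt0Pr => e e0; set K := `|w| + `|w| + 1 + 2 * `|B|.
have K0 : 0 < K by rewrite /K ltr_wpDr ?mulr_ge0 // ltr_wpDl.
set r := Num.min 1 (e / (2 * K)).
have r0 : 0 < r by rewrite lt_min ltr01 divr_gt0 ?mulr_gt0.
have [y [wy ey]] := near_w (e / 2) r (divr_gt0 e0 (ltr0Sn _ 1)) r0.
have y_le : `|y| <= `|w| + 1.
  have := ler_normB w (w - y); rewrite opprB addrC subrK.
  have : r <= 1 by rewrite /r ge_min lexx.
  lra.
have rK : r * K <= e / 2.
  by rewrite -ler_pdivlMr // -mulrA -invfM /r ge_min lexx orbT.
have : `|w - y| * (`|y| + `|w| + 2 * `|B|) <= r * K.
  by apply: ler_pM => //; [rewrite ltW | rewrite /K; lra].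
have := energy_le_near w y; lra.
Qed.

Lemma riesz_representation : exists w, forall v, L v = ip w v.
Proof.
have [w w_min] := energy_has_min; exists w => v; apply/esym/eqP.
rewrite -subr_eq0; apply/eqP/(quad_ge0_lin_coef_eq0 (n := ip v v)) => t.
have := w_min (w + t *: v); rewrite /energy LD LZ; ip_expand; rewrite (ipC v w).
lra.
Qed.

End Riesz.

Definition weak_cvg (T : Type) (F : set_system T) (u : T -> H) (w : H) :=
  forall v, ip (u t) v @[t --> F] --> ip w v.

Lemma ultra_weak_cvg_bounded (T : Type) (U : set_system T) (u : T -> H) (B : R) :
  UltraFilter U -> (forall t, `|u t| <= B) -> exists w, weak_cvg U u w.
Proof.
move=> UU uB.
have ipB v t : `|ip (u t) v| <= B * `|v|.
  by apply: le_trans (normr_ip_le _ _) _; apply: ler_wpM2r.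
pose L v := lim (ip (u t) v @[t --> U]).
have uL v : ip (u t) v @[t --> U] --> L v by apply: ultra_bounded_cvg (ipB v).
have L_linear a v v' : L (a *: v + v') = a * L v + L v'.
  apply: (cvg_lim (@Rhausdorff R)).
  rewrite (_ : (fun t => _) = fun t => a * ip (u t) v + ip (u t) v').
    by apply: cvgD => //; apply: cvgMl_tmp.
  by apply/funext => t; rewrite ipC ipDZl !(ipC (u t)).
have L_bounded v : `|L v| <= B * `|v|.
  by apply: (cvgr_to_le (cvg_norm (uL v))); apply: filterE.
have [w Lw] := riesz_representation L_linear L_bounded.
by exists w => v; rewrite -Lw.
Qed.

Section WeakLimits.
Context {T : Type} {F : set_system T} {FF : ProperFilter F}.

Lemma weak_cvg_subr (u u' : T -> H) (w : H) :
  u t - u' t @[t --> F] --> 0 -> weak_cvg F u w -> weak_cvg F u' w.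
Proof.
move=> uu' uw v.
have uv0 : ip (u t - u' t) v @[t --> F] --> 0.
  by apply: (cvg0_dominated (K := `|v|)) uu' => t; rewrite mulrC normr_ip_le.
rewrite -[ip w v]subr0 (_ : (fun t => _) = fun t => ip (u t) v - ip (u t - u' t) v).
  exact: cvgB (uw v) uv0.
by apply/funext => t; rewrite ipBl opprB addrC subrK.
Qed.

Lemma weak_cvg_closed_convex (D : set H) (P : H -> H) (u : T -> H) (w : H) :
  Defs.convex_set D -> is_metric_projection D P ->
  (forall t, D (u t)) -> weak_cvg F u w -> D w.
Proof.
move=> convD projP Du uw; set q := P w.
have obt t : ip (u t) (w - q) - ip q (w - q) <= 0.
  have := proj_obtuse convD projP w (Du t); rewrite -/q; ip_expand.
  by rewrite ?(ipC q (u t)) ?(ipC w (u t)) ?(ipC q w); lra.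
have le0 : ip (w - q) (w - q) <= 0.
  rewrite ipBl; apply: cvgr_to_le
    (cvgB (uw (w - q)) (cvg_cst (ip q (w - q)))) (filterE _ obt).
by rewrite (ip_subxx_le0_eq le0); apply: proj_mem projP w.
Qed.

Lemma weak_cvg_ism_eq (h : H -> H) (beta B : R) (p : H) (u : T -> H) (w : H) :
  0 < beta -> inverse_strongly_monotone ip beta h ->
  (forall t, `|u t| <= B) -> weak_cvg F u w ->
  h (u t) - h p @[t --> F] --> 0 -> h w = h p.
Proof.
move=> beta0 ism uB uw hu; set d := h p - h w.
(* expand [ism (u t) w] around [h (u t) = h p] *)
pose r1 t := ip (h (u t) - h p) (u t - w) - 2 * beta * ip (h (u t) - h p) d.
pose r2 t := ip (u t) d - ip w d.
have le_r t : beta * ip d d <= r1 t + r2 t.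
  have := ism (u t) w; rewrite -ipxx.
  have := mulr_ge0 (ltW beta0) (ip_ge0 (h (u t) - h p)).
  rewrite /r1 /r2 /d; ip_expand.
  set a := h (u t); set c := h p; set e := h w; set z := u t.
  rewrite ?(ipC c a) ?(ipC e a) ?(ipC z a) ?(ipC w a) ?(ipC e c) ?(ipC z c) ?(ipC w c).
  by rewrite ?(ipC z e) ?(ipC w e) ?(ipC w z); lra.
have r1_0 : r1 t @[t --> F] --> 0.
  apply: (cvg0_dominated (K := B + `|w| + 2 * beta * `|d|)) hu => t.
  apply: le_trans (ler_normB _ _) _.
  rewrite normrM normrM (ger0_norm (ltW beta0)) (ger0_norm (ler0n _ 2)).
  have := normr_ip_le (h (u t) - h p) (u t - w).
  have := normr_ip_le (h (u t) - h p) d.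
  have : `|u t - w| <= B + `|w| by apply: le_trans (ler_normB _ _) _; rewrite lerD2r.
  have := normr_ge0 (h (u t) - h p); have := normr_ge0 d; nra.
have r2_0 : r2 t @[t --> F] --> 0.
  by rewrite -(subrr (ip w d)); apply: cvgB => //; exact: cvg_cst.
have : beta * ip d d <= 0.
  by rewrite -(addr0 0); apply: cvgr_to_ge (cvgD r1_0 r2_0) (filterE _ le_r).
rewrite pmulr_rle0 // => le0; exact/esym/ip_subxx_le0_eq.
Qed.

Lemma weak_cvg_SOL (D : set H) (P h : H -> H) (lam B : R) (p : H) (a b : T -> H) (w : H) :
  Defs.convex_set D -> is_metric_projection D P -> 0 < lam ->
  (forall t, b t = P (a t - lam *: h (a t))) ->
  (a t - b t) - lam *: (h (a t) - h p) @[t --> F] --> 0 ->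
  (forall t, `|b t| <= B) -> weak_cvg F b w -> h w = h p -> SOL ip D h w.
Proof.
move=> convD projP lam0 bP e0 bB bw hw; split.
  apply: (weak_cvg_closed_convex convD projP _ bw) => t.
  by rewrite bP; apply: proj_mem projP _.
move=> z Dz; pose e t := (a t - b t) - lam *: (h (a t) - h p).
have le_lam t : ip (e t) (z - b t) + lam * ip (b t) (h p) <= lam * ip (h p) z.
  have := proj_obtuse convD projP (a t - lam *: h (a t)) Dz.
  rewrite -bP /e; ip_expand.
  set x1 := a t; set x2 := h (a t); set x3 := b t; set x4 := h p.
  rewrite ?(ipC x2 x1) ?(ipC x3 x1) ?(ipC x4 x1) ?(ipC z x1) ?(ipC x3 x2).
  by rewrite ?(ipC x4 x2) ?(ipC z x2) ?(ipC x4 x3) ?(ipC z x3) ?(ipC z x4); lra.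
have r1_0 : ip (e t) (z - b t) @[t --> F] --> 0.
  apply: (cvg0_dominated (K := `|z| + B)) e0 => t.
  apply: le_trans (normr_ip_le _ _) _; rewrite mulrC ler_wpM2r //.
  by apply: le_trans (ler_normB _ _) _; rewrite lerD2l.
have : 0 + lam * ip w (h p) <= lam * ip (h p) z.
  exact: cvgr_to_le (cvgD r1_0 (cvgMl_tmp (a := lam) (bw (h p)))) (filterE _ le_lam).
by rewrite add0r hw ipBr (ipC (h p) w) -subr_ge0 -mulrBr pmulr_rge0.
Qed.

End WeakLimits.

Section Fejer.
Variables (D : set H) (P : H -> H) (z : nat -> H).
Hypotheses (convD : Defs.convex_set D) (projP : is_metric_projection D P)
  (fejer : forall p k, D p -> `|z k.+1 - p| <= `|z k - p|).

Lemma fejer_le p k m : D p -> (k <= m)%N -> `|z m - p| <= `|z k - p|.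
Proof.
by move=> Dp; apply/(nonincreasing_seqP (fun k => `|z k - p|)).1 => j; apply: fejer.
Qed.

Lemma fejer_bounded p k : D p -> `|z k| <= `|p| + `|z 0%N - p|.
Proof.
move=> Dp; have := fejer_le Dp (leq0n k).
by have := ler_normD (z k - p) p; rewrite subrK addrC; lra.
Qed.

Let d k := `|z k - P (z k)| ^+ 2.

Lemma fejer_dist_nonincreasing k : `|z k.+1 - P (z k.+1)| <= `|z k - P (z k)|.
Proof. exact: le_trans ((projP _).2 _ (proj_mem projP _)) (fejer _ (proj_mem projP _)). Qed.

Lemma fejer_proj_sub_sqr k m : (k <= m)%N ->
  `|P (z m) - P (z k)| ^+ 2 <= 2 * (d k - d m).
Proof.
move=> km; set um := P (z m); set uk := P (z k).
have half0 : (0 : R) <= 2^-1 by rewrite invr_ge0.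
have half1 : (2 : R)^-1 <= 1 by rewrite invf_le1 ?ler1n.
have Dmid := convD (proj_mem projP (z m)) (proj_mem projP (z k)) half0 half1.
have := (projP (z m)).2 _ Dmid; rewrite -ler_sqr ?nnegrE // => le_m.
have := fejer_le (proj_mem projP (z k)) km; rewrite -ler_sqr ?nnegrE // => le_k.
move: le_m le_k; rewrite /d -!ipxx -/um -/uk; ip_expand.
have -> : 1 - (2 : R)^-1 = 2^-1 by field.
set xm := z m; set xk := z k.
rewrite ?(ipC um xm) ?(ipC uk xm) ?(ipC uk um) ?(ipC xk xm) ?(ipC um xk) ?(ipC uk xk).
have : (2 : R)^-1 * 2 = 1 by rewrite mulVf.
nra.
Qed.

Lemma fejer_proj_cvg : exists xs : H, P (z k) @[k --> \oo] --> xs.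
Proof.
apply/cvg_ex/cauchy_cvgP; apply: cauchy_exP => e e0.
have [N dN] := ge0_seq_almost_min (a := d) (fun k => sqr_ge0 _)
  (divr_gt0 (exprn_gt0 2 e0) (ltr0n _ 4 : (0 : R) < 4)).
exists (P (z N)), N => // m /= Nm; rewrite -ball_normE /= distrC.
have := fejer_proj_sub_sqr Nm; have := dN m.
rewrite -(ltr_pXn2r (n := 2)) ?nnegrE //; nra.
Qed.

Lemma fejer_weak_cluster_eq (U : set_system nat) {UF : ProperFilter U} (w xs : H) :
  \oo `<=` U -> D w -> weak_cvg U z w -> P (z k) @[k --> \oo] --> xs -> w = xs.
Proof.
move=> finer Dw zw Pzxs; set K := `|z 0%N - P (z 0%N)|.
have dist_le k : `|z k - P (z k)| <= K.
  by apply: (nonincreasing_seqP (fun k => `|z k - P (z k)|)).1 (leq0n k);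
    apply: fejer_dist_nonincreasing.
(* [w - P z_k] is split as [(w - xs) + (xs - P z_k)] in the obtuse-angle inequality *)
have le_r k : ip (z k) (w - xs) - ip (P (z k)) (w - xs) <= K * `|P (z k) - xs|.
  have := proj_obtuse convD projP (z k) Dw.
  have := ip_le (z k - P (z k)) (P (z k) - xs).
  have := ler_wpM2r (normr_ge0 (P (z k) - xs)) (dist_le k).
  set u := P (z k); ip_expand; rewrite ?(ipC u (z k)) ?(ipC xs (z k)) ?(ipC u xs).
  by rewrite ?(ipC w (z k)) ?(ipC w u); lra.
have Pz0 : P (z k) - xs @[k --> \oo] --> 0.
  by rewrite -(subrr xs); apply: cvgB => //; exact: cvg_cst.
have lhs : ip (z k) (w - xs) - ip (P (z k)) (w - xs) @[k --> U] --> ip (w - xs) (w - xs).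
  rewrite ipBl; apply: cvgB; first exact: zw.
  apply: cvg_trans (cvg_app _ finer) _; rewrite -[ip xs _]addr0.
  rewrite (_ : (fun k => _) = fun k => ip xs (w - xs) + ip (P (z k) - xs) (w - xs)).
    apply: cvgD; first exact: cvg_cst.
    by apply: (cvg0_dominated (K := `|w - xs|)) Pz0 => k; rewrite mulrC normr_ip_le.
  by apply/funext => k; rewrite ipBl addrCA subrr addr0.
have rhs : K * `|P (z k) - xs| @[k --> U] --> 0.
  apply: cvg_trans (cvg_app _ finer) _.
  apply: (cvg0_dominated (K := K)) Pz0 => k.
  by rewrite normrM normr_id (ger0_norm (normr_ge0 _)).
have : 0 <= 0 - ip (w - xs) (w - xs).
  by apply: cvgr_to_ge (cvgB rhs lhs) (filterE _ _) => k; rewrite subr_ge0; exact: le_r.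
by rewrite sub0r oppr_ge0 => /ip_subxx_le0_eq.
Qed.

End Fejer.

Section ProjectedGradientIteration.
Variables (C Q : set H) (f g : H -> H) (alpha1 alpha2 lam : R) (PC PQ : H -> H)
  (x y : nat -> H).
Hypotheses (convC : Defs.convex_set C) (convQ : Defs.convex_set Q)
  (ismf : inverse_strongly_monotone ip alpha1 f)
  (ismg : inverse_strongly_monotone ip alpha2 g)
  (alpha1_gt0 : 0 < alpha1) (alpha2_gt0 : 0 < alpha2)
  (lam_gt0 : 0 < lam) (lam_lt : lam < 2 * Num.min alpha1 alpha2)
  (projC : is_metric_projection C PC) (projQ : is_metric_projection Q PQ)
  (yE : forall k, y k = PQ (x k - lam *: g (x k)))
  (xE : forall k, x k.+1 = PC (y k - lam *: f (y k))).

Local Notation Gamma := (SOL ip C f `&` SOL ip Q g).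

Let c1 : 0 < lam * (2 * alpha1 - lam).
Proof.
have : lam < 2 * alpha1 by apply: lt_le_trans lam_lt _; rewrite ler_pM2l // ge_min lexx.
by move=> ?; apply: mulr_gt0 => //; lra.
Qed.

Let c2 : 0 < lam * (2 * alpha2 - lam).
Proof.
have : lam < 2 * alpha2.
  by apply: lt_le_trans lam_lt _; rewrite ler_pM2l // ge_min lexx orbT.
by move=> ?; apply: mulr_gt0 => //; lra.
Qed.

Definition resid_g p k := (x k - y k) - lam *: (g (x k) - g p).
Definition resid_f p k := (y k - x k.+1) - lam *: (f (y k) - f p).

Lemma resid_g_ineq p k : Gamma p ->
  `|y k - p| ^+ 2 + `|resid_g p k| ^+ 2
  + lam * (2 * alpha2 - lam) * `|g (x k) - g p| ^+ 2 <= `|x k - p| ^+ 2.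
Proof.
move=> [_ [Qp vp]]; rewrite /resid_g.
exact (proj_step_ineq convQ projQ ismg (ltW lam_gt0)
  (proj_step_fixed convQ projQ (ltW lam_gt0) (conj Qp vp)) (yE k)).
Qed.

Lemma resid_f_ineq p k : Gamma p ->
  `|x k.+1 - p| ^+ 2 + `|resid_f p k| ^+ 2
  + lam * (2 * alpha1 - lam) * `|f (y k) - f p| ^+ 2 <= `|y k - p| ^+ 2.
Proof.
move=> [[Cp vp] _]; rewrite /resid_f.
exact (proj_step_ineq convC projC ismf (ltW lam_gt0)
  (proj_step_fixed convC projC (ltW lam_gt0) (conj Cp vp)) (xE k)).
Qed.

Lemma y_dist_le p k : Gamma p -> `|y k - p| <= `|x k - p|.
Proof.
move=> Gp; rewrite -ler_sqr ?nnegrE //; have := resid_g_ineq k Gp.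
have := mulr_ge0 (ltW c2) (sqr_ge0 `|g (x k) - g p|).
by have := sqr_ge0 `|resid_g p k|; lra.
Qed.

Lemma x_fejer p k : Gamma p -> `|x k.+1 - p| <= `|x k - p|.
Proof.
move=> Gp; apply: le_trans (y_dist_le k Gp); rewrite -ler_sqr ?nnegrE //.
have := resid_f_ineq k Gp; have := mulr_ge0 (ltW c1) (sqr_ge0 `|f (y k) - f p|).
by have := sqr_ge0 `|resid_f p k|; lra.
Qed.

Lemma residuals_cvg0 p : Gamma p ->
  [/\ resid_g p k @[k --> \oo] --> 0, resid_f p k @[k --> \oo] --> 0,
      g (x k) - g p @[k --> \oo] --> 0 & f (y k) - f p @[k --> \oo] --> 0].
Proof.
move=> Gp; pose a k := `|x k - p| ^+ 2.
have a_noninc k : a k.+1 <= a k by rewrite /a ler_sqr ?nnegrE ?x_fejer.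
have a_ge0 k : 0 <= a k := sqr_ge0 _.
have decrease k : `|resid_g p k| ^+ 2 + `|resid_f p k| ^+ 2
    + lam * (2 * alpha2 - lam) * `|g (x k) - g p| ^+ 2
    + lam * (2 * alpha1 - lam) * `|f (y k) - f p| ^+ 2 <= a k - a k.+1.
  by have := resid_g_ineq k Gp; have := resid_f_ineq k Gp; rewrite /a; lra.
have Mg k := mulr_ge0 (ltW c2) (sqr_ge0 `|g (x k) - g p|).
have Mf k := mulr_ge0 (ltW c1) (sqr_ge0 `|f (y k) - f p|).
split.
- apply: (cvg0_of_sqr_le_decrease ltr01 a_noninc a_ge0) => k; rewrite mul1r.
  by have := decrease k; have := Mg k; have := Mf k; have := sqr_ge0 `|resid_f p k|; lra.
- apply: (cvg0_of_sqr_le_decrease ltr01 a_noninc a_ge0) => k; rewrite mul1r.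
  by have := decrease k; have := Mg k; have := Mf k; have := sqr_ge0 `|resid_g p k|; lra.
- apply: (cvg0_of_sqr_le_decrease c2 a_noninc a_ge0) => k.
  have := decrease k; have := Mf k; have := sqr_ge0 `|resid_f p k|.
  by have := sqr_ge0 `|resid_g p k|; lra.
- apply: (cvg0_of_sqr_le_decrease c1 a_noninc a_ge0) => k.
  have := decrease k; have := Mg k; have := sqr_ge0 `|resid_f p k|.
  by have := sqr_ge0 `|resid_g p k|; lra.
Qed.

Lemma iterate_steps_cvg0 p : Gamma p ->
  x k - y k @[k --> \oo] --> 0 /\ y k - x k.+1 @[k --> \oo] --> 0.
Proof.
move=> Gp; have [rg rf dg df] := residuals_cvg0 Gp; split.
  rewrite (_ : (fun k => _) = fun k => resid_g p k + lam *: (g (x k) - g p)).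
    rewrite -(addr0 0) -{2}(scaler0 _ lam).
    exact: cvgD rg (cvgZ (cvg_cst lam) dg).
  by apply/funext => k; rewrite /resid_g subrK.
rewrite (_ : (fun k => _) = fun k => resid_f p k + lam *: (f (y k) - f p)).
  rewrite -(addr0 0) -{2}(scaler0 _ lam).
  exact: cvgD rf (cvgZ (cvg_cst lam) df).
by apply/funext => k; rewrite /resid_f subrK.
Qed.

Lemma weak_cluster_in_Gamma (U : set_system nat) {UF : ProperFilter U} p w :
  \oo `<=` U -> Gamma p -> weak_cvg U x w -> Gamma w.
Proof.
move=> finer Gp xw; have [rg rf dg df] := residuals_cvg0 Gp.
have [xy yx] := iterate_steps_cvg0 Gp.
have toU (u : nat -> H) : u k @[k --> \oo] --> 0 -> u k @[k --> U] --> 0.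
  exact: cvg_trans (cvg_app u finer).
have yw : weak_cvg U y w by exact: weak_cvg_subr (toU _ xy) xw.
have x1w : weak_cvg U (fun k => x k.+1) w by exact: weak_cvg_subr (toU _ yx) yw.
have bx k := fejer_bounded x_fejer k Gp.
have by_ k : `|y k| <= `|p| + `|x 0%N - p|.
  have := le_trans (y_dist_le k Gp) (fejer_le x_fejer Gp (leq0n k)).
  by have := ler_normD (y k - p) p; rewrite subrK addrC; lra.
have gw : g w = g p by exact: weak_cvg_ism_eq alpha2_gt0 ismg bx xw (toU _ dg).
have fw : f w = f p by exact: weak_cvg_ism_eq alpha1_gt0 ismf by_ yw (toU _ df).
split.
  exact: weak_cvg_SOL convC projC lam_gt0 xE (toU _ rf) (fun k => bx k.+1) x1w fw.
exact: weak_cvg_SOL convQ projQ lam_gt0 yE (toU _ rg) by_ yw gw.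
Qed.

Lemma proj_gradient_cvg (PG : H -> H) :
  Gamma !=set0 -> is_metric_projection Gamma PG ->
  exists xs, Gamma xs /\ weak_cvg \oo x xs /\ PG (x k) @[k --> \oo] --> xs.
Proof.
move=> [p Gp] projG.
have convG : Defs.convex_set Gamma.
  move=> a b t [Ca Qa] [Cb Qb] t0 t1; split.
    exact: (SOL_convex alpha1_gt0 ismf convC).
  exact: (SOL_convex alpha2_gt0 ismg convQ).
have [xs PGx] := fejer_proj_cvg convG projG x_fejer.
have cluster U : UltraFilter U -> \oo `<=` U -> Gamma xs /\ weak_cvg U x xs.
  move=> UU finer.
  have [w xw] := ultra_weak_cvg_bounded UU (fun k => fejer_bounded x_fejer k Gp).
  have Gw : Gamma w by exact: weak_cluster_in_Gamma finer Gp xw.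
  by rewrite -(fejer_weak_cluster_eq convG projG x_fejer finer Gw xw PGx).
have [U [UU finer]] := @ultraFilterLemma nat \oo _.
exists xs; split; first exact: (cluster U UU finer).1.
split=> // v; apply: cvg_of_ultra => V VV Vfiner.
exact: (cluster V VV Vfiner).2.
Qed.

End ProjectedGradientIteration.

End InnerProduct.

Theorem theorem3p5 (R : realType) (H : completeNormedModType R)
  (inner : H -> H -> R) (C Q : set H) (f g : H -> H)
  (alpha1 alpha2 lambda : R) (PC PQ PG : H -> H) (x y : nat -> H) :
  is_inner_product inner ->
  nonempty_closed_convex C -> nonempty_closed_convex Q ->
  0 < alpha1 -> 0 < alpha2 ->
  inverse_strongly_monotone inner alpha1 f ->
  inverse_strongly_monotone inner alpha2 g ->
  0 < lambda -> lambda < 2 * Num.min alpha1 alpha2 ->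
  SOL inner C f `&` SOL inner Q g !=set0 ->
  is_metric_projection C PC -> is_metric_projection Q PQ ->
  is_metric_projection (SOL inner C f `&` SOL inner Q g) PG ->
  (forall k, y k = PQ (x k - lambda *: g (x k))) ->
  (forall k, x k.+1 = PC (y k - lambda *: f (y k))) ->
  exists xs : H, (SOL inner C f `&` SOL inner Q g) xs /\
    weakly_converges inner x xs /\
    (fun k => PG (x k)) @ \oo --> xs.
Proof.
move=> ipH [_ [_ convC]] [_ [_ convQ]] a1 a2 ismf ismg l0 l2 Gamma_ne projC projQ projG.
move=> yE xE.
exact (proj_gradient_cvg ipH convC convQ ismf ismg a1 a2 l0 l2 projC projQ yE xE
  Gamma_ne projG).
Qed.
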